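(* For any history $\mathcal{F}_{t-1}$, conditioned on the event $E^{\widetilde f}(t)$, \[ \mathbb{P}\big(\mathbf{x}_t\in\mathcal{X}\setminus S_t\mid\mathcal{F}_{t-1}\big)\ge p-1/t^2,\qquad p=\frac{1}{4e\sqrt\pi}. \]
   Context: $\mathcal{X}$ finite subset of the unit ball of $\mathbb{R}^d$; $f\sim\mathcal{GP}(0,k)$, $k$ the exact NTK with $k\le K_0$, $|f|\le B'$; noise $\mathcal{N}(0,\sigma^2)$; $\delta\in(0,1)$, horizon $T$; $\mathbf{x}^*$ maximizes $f$, $\Delta(\mathbf{x})=f(\mathbf{x}^* )-f(\mathbf{x})$. $\widetilde k$ is the empirical NTK (gradient inner product of a network with $L+1$ layers at initialization) with $|\widetilde k-k|\le(L+1)\varepsilon$ on $\mathcal{X}\times\mathcal{X}$, $(L+1)\varepsilon\le1$, $\sigma^2\le1$, $\hat K_0=\max\{1,K_0\}$. $\beta_t=2\log(2\pi^2t^2|\mathcal{X}|/(3\delta))$, $c_t=\beta_t(1+\sqrt{2\log(|\mathcal{X}|t^2)})$. Queries indexed sequentially; $\mathrm{fb}[t]$ largest index observed when $\mathbf{x}_t$ is chosen ($t-\mathrm{fb}[t]\le B$); $\mathcal{F}_{t-1}$ the history. $\widetilde\mu_{\mathrm{fb}[t]},\widetilde\sigma_{\mathrm{fb}[t]}$: GP posterior mean/std with kernel $\widetilde k$ given observations $1,\dots,\mathrm{fb}[t]$; given $\mathcal{F}_{t-1}$, $\widetilde f_t\sim\mathcal{GP}(\widetilde\mu_{\mathrm{fb}[t]},\beta_t^2\widetilde\sigma^2_{\mathrm{fb}[t]})$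 and $\mathbf{x}_t=\arg\max_{\mathbf{x}}\widetilde f_t(\mathbf{x})$. $\epsilon_{m,t}=2\hat K_0\frac{t^2(L+1)\varepsilon}{\sigma^4}(B'+\sigma\sqrt{2\log(4T/\delta)})+\beta_t\sqrt{(L+1)\varepsilon(1+4\hat K_0^2t^2/\sigma^4)}$. $E^{\widetilde f}(t)$: $|\widetilde\mu_{\mathrm{fb}[t]}(\mathbf{x})-f(\mathbf{x})|\le\beta_t\widetilde\sigma_{\mathrm{fb}[t]}(\mathbf{x})+\epsilon_{m,t}$ for all $\mathbf{x}$. Saturated set: $S_t=\{\mathbf{x}\in\mathcal{X}:\Delta(\mathbf{x})>c_t\widetilde\sigma_{\mathrm{fb}[t]}(\mathbf{x})+2\epsilon_{m,t}\}$. *)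

From HB Require Import structures.
From mathcomp Require Import all_boot all_order all_algebra.
From mathcomp Require Import all_classical all_reals all_analysis.
Set Implicit Arguments. Unset Strict Implicit. Unset Printing Implicit Defensive.
Import Order.TTheory GRing.Theory Num.Theory.
Local Open Scope classical_set_scope.
Local Open Scope ring_scope.

Section Defs.
Context {R : realType}.

Definition gauss_law (m v : R) : set R -> \bar R :=
  if v == 0 then dirac m else normal_prob m (Num.sqrt v).

Definition is_normal_rv {dO} {Omega : measurableType dO}
  (P : probability Omega R) (Y : Omega -> R) (m v : R) : Prop :=
  measurable_fun setT Y /\
  forall A : set R, measurable A -> P (Y @^-1` A) = gauss_law m v A.

(** A random function [F] on a finite index set [X] is distributed as
    GP(m, C): every linear combination of its values is Gaussian with the
    corresponding mean and variance (i.e. (F x)_x is multivariate normal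
    with mean vector m and covariance matrix C). *)
Definition is_gp {X : finType} {dO} {Omega : measurableType dO}
  (P : probability Omega R) (F : Omega -> X -> R)
  (m : X -> R) (C : X -> X -> R) : Prop :=
  forall a : X -> R,
    is_normal_rv P (fun w => \sum_(x : X) a x * F w x)
      (\sum_(x : X) a x * m x)
      (\sum_(x : X) \sum_(y : X) a x * a y * C x y).

(** Empirical NTK: inner product of the gradient feature maps [g]. *)
Definition ntk_emp {X : Type} {np : nat} (g : X -> 'rV[R]_np) (x y : X) : R :=
  \sum_(i < np) g x 0 i * g y 0 i.

Definition post_Kinv {X : Type} (k : X -> X -> R) (s2 : R) {n : nat}
  (xs : 'I_n -> X) : 'M[R]_n :=
  invmx (\matrix_(i, j) k (xs i) (xs j) + s2%:M).

Definition post_mean {X : Type} (k : X -> X -> R) (s2 : R) {n : nat}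
  (xs : 'I_n -> X) (ys : 'I_n -> R) (x : X) : R :=
  \sum_(i < n) \sum_(j < n) k x (xs i) * post_Kinv k s2 xs i j * ys j.

Definition post_cov {X : Type} (k : X -> X -> R) (s2 : R) {n : nat}
  (xs : 'I_n -> X) (x y : X) : R :=
  k x y - \sum_(i < n) \sum_(j < n) k x (xs i) * post_Kinv k s2 xs i j * k (xs j) y.

Definition post_sd {X : Type} (k : X -> X -> R) (s2 : R) {n : nat}
  (xs : 'I_n -> X) (x : X) : R :=
  Num.sqrt (post_cov k s2 xs x x).

Definition beta_t (cardX : nat) (delta : R) (t : nat) : R :=
  2 * ln (2 * pi ^+ 2 * (t%:R) ^+ 2 * cardX%:R / (3 * delta)).

Definition c_t (cardX : nat) (delta : R) (t : nat) : R :=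
  beta_t cardX delta t * (1 + Num.sqrt (2 * ln (cardX%:R * (t%:R) ^+ 2))).

Definition eps_mt (cardX : nat) (delta : R) (t T : nat) (K0 : R) (L : nat)
  (eps Bp sigma : R) : R :=
  let K0h := Num.max 1 K0 in
  2 * K0h * ((t%:R) ^+ 2 * (L.+1)%:R * eps / sigma ^+ 4)
    * (Bp + sigma * Num.sqrt (2 * ln (4 * T%:R / delta)))
  + beta_t cardX delta t
    * Num.sqrt ((L.+1)%:R * eps * (1 + 4 * K0h ^+ 2 * (t%:R) ^+ 2 / sigma ^+ 4)).

Definition p_const : R := 1 / (4 * expR 1 * Num.sqrt pi).

End Defs.

From HB Require Import structures.
From mathcomp Require Import all_boot all_order all_algebra.
From mathcomp Require Import all_classical all_reals all_analysis.
From mathcomp Require Import ring lra measurable_realfun normal_distribution.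
Import Order.TTheory GRing.Theory Num.Theory.
Local Open Scope classical_set_scope.
Local Open Scope ring_scope.

(* The Thompson sample at x has law N(mu x, beta_t^2 sd(x)^2).  By
   anti-concentration, the sample at the optimum x* lies one standard
   deviation above its mean with probability at least p; by a Gaussian tail
   bound and a union bound over X, every sample stays less than c standard
   deviations above its mean, except with probability |X| exp(-c^2/2) = 1/t^2
   for c = sqrt(2 log(|X| t^2)).  On the intersection of these events, the
   maximality of the sample at x_t and the confidence bound E(t) at x* and at
   x_t give  f x* - f x_t <= beta_t (1 + c) sd(x_t) + 2 eps_mt = c_t sd(x_t)
   + 2 eps_mt,  i.e. x_t is not saturated. *)

Section normal_tails.
Context {R : realType}.

Lemma normal_prob_le_pdf_ratio (m a s K : R) (I : set R) :
  measurable I -> 0 <= K ->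
  (forall x, I x -> normal_pdf m s x <= K * normal_pdf a s x) ->
  (normal_prob m s I <= K%:E)%E.
Proof.
move=> mI K_ge0 pdf_le.
apply: (@le_trans _ _ (K%:E * normal_prob a s I)%E); last first.
  by rewrite -[leRHS]mule1; apply: lee_pmul => //; exact: probability_le1.
rewrite /normal_prob -ge0_integralZl_EFin //; last first.
- by apply/measurable_EFinP; exact: measurable_funS (measurable_normal_pdf a s).
- by move=> x _; rewrite lee_fin normal_pdf_ge0.
apply: ge0_le_integral => //.
- by move=> x _; rewrite lee_fin normal_pdf_ge0.
- by apply/measurable_EFinP; exact: measurable_funS (measurable_normal_pdf m s).
- apply: (@measurable_funeM _ _ _ _ (fun x => (normal_pdf a s x)%:E)).
  by apply/measurable_EFinP; exact: measurable_funS (measurable_normal_pdf a s).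
Qed.

(* The tail [(m + c s, +oo)] of N(m, s^2) is dominated by [expR (- c^2 / 2)]
   times the one of N(m + c s, s^2), by completing the square. *)
Lemma normal_prob_upper_tail (m s c : R) : 0 < s -> 0 <= c ->
  (normal_prob m s `](m + c * s)%R, +oo[ <= (expR (- c ^+ 2 / 2))%:E)%E.
Proof.
move=> s_gt0 c_ge0; apply: (@normal_prob_le_pdf_ratio m (m + c * s)).
- exact: measurable_itv.
- exact: expR_ge0.
move=> x /=; rewrite in_itv/= andbT => x_gt.
rewrite /normal_pdf gt_eqF // /normal_fun mulrCA.
rewrite ler_pM2l ?normal_peak_gt0 ?gt_eqF // -expRD ler_expR -subr_ge0.
have -> : - c ^+ 2 / 2 + - (x - (m + c * s)) ^+ 2 / (s ^+ 2 *+ 2)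
          - - (x - m) ^+ 2 / (s ^+ 2 *+ 2) = c * (x - (m + c * s)) / s.
  by field; rewrite gt_eqF.
by rewrite divr_ge0 ?mulr_ge0 ?subr_ge0 // ltW.
Qed.

(* The right-hand side bounds the N(m, s^2)-mass of [m + s, m + 3s/2] from
   below, since the density there is at least its value at m + 3s/2. *)
Lemma p_const_le_normal_mass (s : R) : 0 < s ->
  p_const <= normal_peak s * expR (- (9 / 8)) * (s / 2).
Proof.
move=> s_gt0.
have sqrtpi_gt0 : 0 < Num.sqrt (pi : R) by rewrite sqrtr_gt0 pi_gt0.
have sqrt2_gt0 : 0 < Num.sqrt (2 : R) by rewrite sqrtr_gt0.
have e_gt0 : 0 < expR (1 : R) by exact: expR_gt0.
have sqrt2_le : Num.sqrt (2 : R) <= 7 / 4.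
  by rewrite -(@ler_pXn2r _ 2) ?nnegrE ?sqr_sqrtr //; lra.
have y_ge : 7 / 8 <= expR (- (1 / 8) : R).
  by apply: le_trans (expR_ge1Dx _); lra.
rewrite /normal_peak /p_const -subr_ge0.
have -> : Num.sqrt (s ^+ 2 * pi *+ 2) = s * Num.sqrt 2 * Num.sqrt pi.
  rewrite -mulr_natr mulrAC sqrtrM; last by rewrite mulr_ge0 ?sqr_ge0.
  by rewrite sqrtrM ?sqr_ge0 // sqrtr_sqr gtr0_norm.
have -> : expR (- (9 / 8) : R) = (expR 1)^-1 * expR (- (1 / 8)).
  by rewrite -expRN -expRD; congr expR; lra.
have -> : (s * Num.sqrt 2 * Num.sqrt pi)^-1 * ((expR 1)^-1 * expR (- (1 / 8)))
          * (s / 2) - 1 / (4 * expR 1 * Num.sqrt pi)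
        = (2 * expR (- (1 / 8)) - Num.sqrt 2)
          / (4 * Num.sqrt 2 * Num.sqrt pi * expR 1).
  by field; rewrite !gt_eqF.
by rewrite divr_ge0 ?mulr_ge0 ?(ltW sqrtpi_gt0) ?(ltW e_gt0) //; lra.
Qed.

Lemma p_const_le1 : p_const <= 1 :> R.
Proof.
have sqrtpi_ge1 : 1 <= Num.sqrt (pi : R).
  by rewrite -sqrtr1; apply: ler_wsqrtr; have := pi_ge2 R; lra.
have e_ge2 : 2 <= expR (1 : R) by apply: le_trans (expR_ge1Dx _); lra.
rewrite /p_const ler_pdivrMr; last by rewrite !mulr_gt0 //; lra.
by rewrite mul1r; nra.
Qed.

Lemma normal_prob_ge_p_const (m s : R) : 0 < s ->
  (p_const%:E <= normal_prob m s `[(m + s)%R, +oo[)%E.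
Proof.
move=> s_gt0; set a := m + s.
apply: (@le_trans _ _ (normal_prob m s `[a, (a + s / 2)%R])); last first.
  apply: le_measure; rewrite ?inE; try exact: measurable_itv.
  by move=> x /=; rewrite !in_itv /= => /andP[-> _].
apply: le_trans (_ : (normal_peak s * expR (- (9 / 8)) * (s / 2))%:E <= _)%E.
  by rewrite lee_fin p_const_le_normal_mass.
have -> : ((normal_peak s * expR (- (9 / 8)) * (s / 2))%:E =
    \int[lebesgue_measure]_(x in `[a, (a + s / 2)%R])
       cst (normal_peak s * expR (- (9 / 8)))%:E x)%E.
  rewrite integral_cst //= lebesgue_measure_itv /= lte_fin ltrDl divr_gt0 //.
  by rewrite -EFinD -EFinM addrAC subrr add0r.
apply: ge0_le_integral => //.
- by move=> x _; rewrite lee_fin mulr_ge0 ?normal_peak_ge0 ?expR_ge0.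
- by apply/measurable_EFinP; exact: measurable_funS (measurable_normal_pdf m s).
move=> x /=; rewrite in_itv /= /a => /andP[x_ge x_le].
rewrite lee_fin /normal_pdf gt_eqF // /normal_fun.
rewrite ler_pM2l ?normal_peak_gt0 ?gt_eqF //.
rewrite ler_expR mulNr lerN2 ler_pdivrMr ?mulrn_wgt0 ?exprn_gt0 //.
by rewrite mulr2n; nra.
Qed.

End normal_tails.

Section normal_random_variable.
Context {R : realType} {dO : measure_display} {Omega : measurableType dO}.
Context {P : probability Omega R}.
Implicit Types (Y : Omega -> R) (m v c : R).

(* [normal_prob m 0] is not a Dirac mass but the uniform law on [0, 1]. *)
Lemma normal_prob0_itv m (a b : R) : 0 <= a -> a <= b -> b <= 1 ->
  normal_prob m 0 `[a, b] = (b - a)%:E.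
Proof.
move=> a0 ab b1; rewrite /normal_prob /normal_pdf eqxx integral_indic//=.
rewrite setIidr; last by move=> x /=; rewrite !in_itv/= => /andP[xa xb]; lra.
rewrite lebesgue_measure_itv/= lte_fin.
have [_|ba] := ltP a b; first by rewrite EFinB.
suff -> : a = b by rewrite subrr.
by apply/eqP; rewrite eq_le ab.
Qed.

(* A negative variance would make the laws of [Y] and [2 * Y] both uniform
   on [0, 1]. *)
Lemma is_normal_rv_var_ge0 {Y m v} : is_normal_rv P Y m v ->
  is_normal_rv P (fun w => 2 * Y w) (2 * m) (4 * v) -> 0 <= v.
Proof.
move=> [_ lawY] [_ law2Y]; rewrite leNgt; apply/negP => v_lt0.
have v4_lt0 : 4 * v < 0 by rewrite pmulr_rlt0.
have := lawY `[0, 1/2]%classic (measurable_itv _).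
have := law2Y `[0, 1]%classic (measurable_itv _).
rewrite /gauss_law (lt_eqF v_lt0) (lt_eqF v4_lt0) !ltr0_sqrtr //.
rewrite !normal_prob0_itv //; last lra.
have -> : (fun w => 2 * Y w) @^-1` `[0, 1] = Y @^-1` `[0, 1/2].
  by apply/seteqP; split => w /=; rewrite !in_itv/= => /andP[? ?];
    apply/andP; lra.
by move=> -> /(congr1 fine)/=; lra.
Qed.

Lemma is_normal_rv_measurable_preimage {Y m v} (B : set R) :
  is_normal_rv P Y m v -> measurable B -> measurable (Y @^-1` B).
Proof. by move=> [mY _] mB; rewrite -[_ @^-1` _]setTI; exact: mY. Qed.

Lemma is_normal_rv_upper_tail {Y m v} c :
  is_normal_rv P Y m v -> 0 <= v -> 0 <= c ->
  (P [set w | (m + c * Num.sqrt v < Y w)%R] <= (expR (- c ^+ 2 / 2))%:E)%E.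
Proof.
move=> [_ lawY] v_ge0 c_ge0; rewrite -preimage_itvoy lawY ?measurable_itv //.
rewrite /gauss_law; have [->|v_neq0] := eqVneq v 0.
  rewrite diracE sqrtr0 mulr0 addr0 memNset ?lee_fin ?expR_ge0 //=.
  by rewrite in_itv /= ltxx.
by apply: normal_prob_upper_tail; rewrite // sqrtr_gt0 lt_neqAle eq_sym v_neq0.
Qed.

Lemma is_normal_rv_ge_p_const {Y m v} : is_normal_rv P Y m v -> 0 <= v ->
  (p_const%:E <= P [set w | (m + Num.sqrt v <= Y w)%R])%E.
Proof.
move=> [_ lawY] v_ge0; rewrite -preimage_itvcy lawY ?measurable_itv //.
rewrite /gauss_law; have [->|v_neq0] := eqVneq v 0.
  rewrite diracE sqrtr0 addr0 mem_set ?lee_fin ?p_const_le1 //=.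
  by rewrite in_itv /= lexx.
by apply: normal_prob_ge_p_const; rewrite sqrtr_gt0 lt_neqAle eq_sym v_neq0.
Qed.

End normal_random_variable.

Section gaussian_process_marginals.
Context {R : realType} {X : finType} {dO : measure_display}
  {Omega : measurableType dO}.
Context {P : probability Omega R} {F : Omega -> X -> R}.
Context {m : X -> R} {C : X -> X -> R}.
Hypothesis F_gp : is_gp P F m C.

Lemma is_gp_scaled_marginal (r : R) (x : X) :
  is_normal_rv P (fun w => r * F w x) (r * m x) (r ^+ 2 * C x x).
Proof.
pose a y := if y == x then r else 0.
have sum_a (h : X -> R) : \sum_(y : X) a y * h y = r * h x.
  rewrite (bigD1 x) //= big1 ?addr0 /a ?eqxx // => y /negbTE ->.
  by rewrite mul0r.
have sum2_a : \sum_(y : X) \sum_(z : X) a y * a z * C y z = r ^+ 2 * C x x.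
  under eq_bigr do under eq_bigr do rewrite -mulrA.
  under eq_bigr do rewrite -big_distrr /= sum_a.
  by rewrite sum_a mulrA.
have := F_gp a; rewrite sum_a sum2_a.
by under [X in is_normal_rv _ X]funext do rewrite sum_a.
Qed.

Lemma is_gp_marginal (x : X) : is_normal_rv P (F^~ x) (m x) (C x x).
Proof.
have := is_gp_scaled_marginal 1 x; rewrite expr1n !mul1r.
by under [X in is_normal_rv _ X]funext do rewrite mul1r.
Qed.

Lemma is_gp_var_ge0 (x : X) : 0 <= C x x.
Proof.
apply: is_normal_rv_var_ge0 (is_gp_marginal x) _.
by have := is_gp_scaled_marginal 2 x; rewrite [2 ^+ 2]expr2 -natrM.
Qed.

End gaussian_process_marginals.

Section measure_bounds.
Context {d : measure_display} {T : measurableType d} {R : realType}.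
Variable mu : {measure set T -> \bar R}.

Lemma measure_bigsetU_le {I : finType} {F : I -> set T} :
  (forall i, measurable (F i)) ->
  (mu (\big[setU/set0]_(i : I) F i) <= \sum_(i : I) mu (F i))%E.
Proof.
move=> mF.
suff [] : measurable (\big[setU/set0]_(i : I) F i) /\
          (mu (\big[setU/set0]_(i : I) F i) <= \sum_(i : I) mu (F i))%E by [].
apply: (big_ind2 (fun A s => measurable A /\ (mu A <= s)%E)).
- by rewrite measure0.
- move=> A s B u [mA muA] [mB muB].
  split; first exact: measurableU.
  exact: le_trans (measureU2 _ mA mB) (leeD muA muB).
- by move=> i _; split; [exact: mF|].
Qed.

Lemma measure_le_setD_add {A B : set T} : measurable A -> measurable B ->
  (mu A <= mu (A `\` B) + mu B)%E.
Proof.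
move=> mA mB; rewrite (measureDI mu mA mB) leeD2l //.
by rewrite le_measure ?inE //; exact: measurableI.
Qed.

Lemma measurable_preimage_of_fibers {X : finType} {xt : T -> X} (Q : set X) :
  (forall x, measurable [set w | xt w = x]) -> measurable (xt @^-1` Q).
Proof.
move=> m_fiber; have -> : xt @^-1` Q = \bigcup_(x in Q) [set w | xt w = x].
  apply/seteqP; split => [w Qw|w [x Qx /= xtw]]; first by exists (xt w).
  by rewrite /= xtw.
exact: fin_bigcup_measurable finite_finset _.
Qed.

End measure_bounds.

Section thompson_sampling.
Context {R : realType} {X : finType} {dO : measure_display}
  {Omega : measurableType dO}.
Context {P : probability Omega R} {F : Omega -> X -> R}.
Context {m : X -> R} {C : X -> X -> R}.
Hypothesis F_gp : is_gp P F m C.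
Context {xt : Omega -> X}.
Hypothesis xt_max : forall w x, F w x <= F w (xt w).
Hypothesis xt_meas : forall x, measurable [set w | xt w = x].

Local Notation sd x := (Num.sqrt (C x x)).

Context {f : X -> R} {e : R} (xstar : X).
Hypothesis m_close : forall x, `|m x - f x| <= sd x + e.

Let sampled_high := [set w | m xstar + sd xstar <= F w xstar].
Let overshoot (c : R) (x : X) := [set w | m x + c * sd x < F w x].

Lemma argmax_gap_le c w : sampled_high w -> ~ overshoot c (xt w) w ->
  f xstar - f (xt w) <= (1 + c) * sd (xt w) + 2 * e.
Proof.
rewrite /sampled_high /overshoot /= => high /negP; rewrite -leNgt => low.
have := m_close xstar; have := m_close (xt w); have := xt_max w xstar.
by rewrite !ler_norml => ? /andP[? ?] /andP[? ?]; lra.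
Qed.

Lemma argmax_gap_le_prob c : 0 <= c ->
  ((p_const - #|X|%:R * expR (- c ^+ 2 / 2))%:E <=
   P [set w | (f xstar - f (xt w) <= (1 + c) * sd (xt w) + 2 * e)%R])%E.
Proof.
move=> c_ge0.
have law := is_gp_marginal F_gp; have var_ge0 := is_gp_var_ge0 F_gp.
have m_high : measurable sampled_high.
  rewrite /sampled_high -preimage_itvcy.
  exact: is_normal_rv_measurable_preimage (law _) (measurable_itv _).
have m_overshoot x : measurable (overshoot c x).
  rewrite /overshoot -preimage_itvoy.
  exact: is_normal_rv_measurable_preimage (law _) (measurable_itv _).
set U := \big[setU/set0]_(x : X) overshoot c x.
have m_U : measurable U by exact: bigsetU_measurable.
have P_U : (P U <= (#|X|%:R * expR (- c ^+ 2 / 2))%:E)%E.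
  apply: le_trans (measure_bigsetU_le P m_overshoot) _.
  have -> : (#|X|%:R * expR (- c ^+ 2 / 2))%:E
            = (\sum_(x : X) (expR (- c ^+ 2 / 2))%:E)%E.
    by rewrite sumEFin sumr_const mulr_natl.
  apply: lee_sum => x _.
  exact: is_normal_rv_upper_tail (law x) (var_ge0 x) c_ge0.
have high_U_sub : sampled_high `\` U `<=`
    [set w | (f xstar - f (xt w) <= (1 + c) * sd (xt w) + 2 * e)%R].
  move=> w [high not_U]; apply: argmax_gap_le high _ => over.
  by apply: not_U; rewrite /U (bigD1 (xt w)) //; left.
rewrite EFinB leeBlDr //.
apply: (@le_trans _ _ (P sampled_high)).
  exact: is_normal_rv_ge_p_const (law xstar) (var_ge0 xstar).
apply: le_trans (measure_le_setD_add P m_high m_U) _; apply: leeD P_U.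
apply: le_measure high_U_sub; rewrite inE; first exact: measurableD.
exact: (measurable_preimage_of_fibers
  [set x | (f xstar - f x <= (1 + c) * sd x + 2 * e)%R] xt_meas).
Qed.

End thompson_sampling.

Lemma beta_t_ge0 {R : realType} (n : nat) (delta : R) (t : nat) :
  (0 < n)%N -> 0 < delta <= 1 -> (0 < t)%N -> 0 <= beta_t n delta t.
Proof.
move=> n_gt0 /andP[delta_gt0 delta_le1] t_gt0.
have pi2_ge4 : 4 <= pi ^+ 2 :> R by rewrite expr2; have := pi_ge2 R; nra.
have tn_ge1 : 1 <= t%:R ^+ 2 * n%:R :> R.
  by rewrite mulr_ege1 ?exprn_ege1 ?ler1n.
rewrite /beta_t mulr_ge0 // ln_ge0 // ler_pdivlMr ?mulr_gt0 // mul1r.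
have -> : 2 * pi ^+ 2 * t%:R ^+ 2 * n%:R
          = 2 * (pi ^+ 2 * (t%:R ^+ 2 * n%:R)) :> R by ring.
by nra.
Qed.

Lemma expR_sqrt_2ln {R : realType} (N : R) : 1 <= N ->
  expR (- Num.sqrt (2 * ln N) ^+ 2 / 2) = N^-1.
Proof.
move=> N_ge1; rewrite sqr_sqrtr ?mulr_ge0 ?ln_ge0 //.
have -> : - (2 * ln N) / 2 = - ln N by field.
by rewrite expRN lnK // posrE; lra.
Qed.

Theorem lemma15
  (R : realType)
  (* finite domain X, embedded injectively in the unit ball of R^d *)
  (d : nat) (X : finType) (emb : X -> 'rV[R]_d)
  (emb_inj : injective emb)
  (emb_ball : forall x, \sum_(i < d) emb x 0 i ^+ 2 <= 1)
  (* exact NTK k, bounded by K0 *)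
  (k : X -> X -> R) (K0 : R) (k_le : forall x y, k x y <= K0)
  (* empirical NTK = gradient inner product of the network at init *)
  (np : nat) (g : X -> 'rV[R]_np) (L : nat) (eps : R)
  (eps_ge0 : 0 <= eps)
  (k_close : forall x y, `|ntk_emp g x y - k x y| <= (L.+1)%:R * eps)
  (Leps_le1 : (L.+1)%:R * eps <= 1)
  (* the unknown function f, bounded by B' *)
  (f : X -> R) (Bp : R) (f_bd : forall x, `|f x| <= Bp)
  (* noise level, confidence, horizon, batch delay *)
  (sigma : R) (sigma_gt0 : 0 < sigma) (sigma2_le1 : sigma ^+ 2 <= 1)
  (delta : R) (delta_gt0 : 0 < delta) (delta_lt1 : delta < 1)
  (T t fb B : nat) (t_ge1 : (1 <= t)%N) (t_leT : (t <= T)%N)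
  (fb_lt : (fb < t)%N) (batch : (t - fb <= B)%N)
  (* the history: observations 1..fb[t] *)
  (xs : 'I_fb -> X) (ys : 'I_fb -> R)
  (* maximizer of f *)
  (xstar : X) (xstar_max : forall x, f x <= f xstar)
  (* the event E^{f~}(t) *)
  (HE : forall x,
     `|post_mean (ntk_emp g) (sigma ^+ 2) xs ys x - f x|
       <= beta_t #|X| delta t * post_sd (ntk_emp g) (sigma ^+ 2) xs x
          + eps_mt #|X| delta t T K0 L eps Bp sigma)
  (* conditional law of the Thompson sample f~_t given F_{t-1} *)
  (dO : measure_display) (Omega : measurableType dO)
  (P : probability Omega R) (Ft : Omega -> X -> R)
  (Ft_law : is_gp P Ft (post_mean (ntk_emp g) (sigma ^+ 2) xs ys)
              (fun x y => beta_t #|X| delta t ^+ 2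
                          * post_cov (ntk_emp g) (sigma ^+ 2) xs x y))
  (* x_t = argmax of f~_t (any measurable maximizer selection) *)
  (xt : Omega -> X) (xt_max : forall w x, Ft w x <= Ft w (xt w))
  (xt_meas : forall x, measurable [set w | xt w = x]) :
  ((p_const - 1 / (t%:R) ^+ 2)%:E <=
   P [set w | ~ (f xstar - f (xt w) >
                 c_t #|X| delta t * post_sd (ntk_emp g) (sigma ^+ 2) xs (xt w)
                 + 2 * eps_mt #|X| delta t T K0 L eps Bp sigma)%R])%E.
Proof.
set beta := beta_t #|X| delta t.
set em := eps_mt #|X| delta t T K0 L eps Bp sigma.
set sd := post_sd (ntk_emp g) (sigma ^+ 2) xs.
have card_gt0 : (0 < #|X|)%N by apply/card_gt0P; exists xstar.
have N_ge1 : 1 <= #|X|%:R * t%:R ^+ 2 :> R.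
  by rewrite mulr_ege1 ?exprn_ege1 ?ler1n.
have beta_ge0 : 0 <= beta by apply: beta_t_ge0; rewrite ?delta_gt0 ?ltW.
have sd_eq x : Num.sqrt (beta ^+ 2 * post_cov (ntk_emp g) (sigma ^+ 2) xs x x)
               = beta * sd x.
  by rewrite sqrtrM ?sqr_ge0 // sqrtr_sqr ger0_norm.
have mean_close x : `|post_mean (ntk_emp g) (sigma ^+ 2) xs ys x - f x|
    <= Num.sqrt (beta ^+ 2 * post_cov (ntk_emp g) (sigma ^+ 2) xs x x) + em.
  by rewrite sd_eq; exact: HE.
pose c : R := Num.sqrt (2 * ln (#|X|%:R * t%:R ^+ 2)).
have := argmax_gap_le_prob Ft_law xt_max xt_meas xstar mean_close c
  (sqrtr_ge0 _).
rewrite expR_sqrt_2ln // invfM mulrA mulfV ?mul1r ?pnatr_eq0 -?lt0n // -div1r.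
have c_t_sd x : c_t #|X| delta t * sd x = (1 + c)
    * Num.sqrt (beta ^+ 2 * post_cov (ntk_emp g) (sigma ^+ 2) xs x x).
  by rewrite sd_eq mulrCA mulrA.
congr (_ <= P _)%E; apply/seteqP.
by split => w /=; rewrite -c_t_sd leNgt => /negP.
Qed.
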